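(* Let $n\ge 3$ and let $o,o'\in N$ differ at most in the first component. Then $\mathcal{I}^{\langle 1\rangle}:x_o=\mathcal{I}^{\langle 1\rangle}:x_{o'}$.
   Context: Fix positive integers $n, r_1,\dots,r_n$, let $N=[r_1]\times\cdots\times[r_n]$, and let $R$ be the polynomial ring over a field in the variables $x_a$, $a\in N$. For $a,b\in N$, ${\rm s}(1,a,b)\in N$ has first component $b_1$ and other components equal to those of $a$. Let $d(a,b)=\#\{j: a_j\neq b_j\}$ and $f_{1,a,b}=x_ax_b-x_{{\rm s}(1,a,b)}x_{{\rm s}(1,b,a)}$. Let $\mathcal{I}^{\langle 1\rangle}=(f_{1,a,b}: a,b\in N,\ d(a,b)=2)$. For an ideal $I$ and element $x$, $I:x=\{f\in R: fx\in I\}$. *)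

From HB Require Import structures.
From mathcomp Require Import all_boot all_algebra.
From mathcomp Require Import mpoly.
Set Implicit Arguments. Unset Strict Implicit. Unset Printing Implicit Defensive.
Import GRing.Theory.
Local Open Scope ring_scope.

(* The index set N = [r_1] x ... x [r_n]; components are 0-based: 'I_(r j). *)
Definition Nidx (n : nat) (r : 'I_n -> nat) : finType :=
  {dffun forall j : 'I_n, 'I_(r j)}.

Definition swp n (r : 'I_n -> nat) (j1 : 'I_n) (a b : Nidx r) : Nidx r :=
  [ffun j => if j == j1 then b j else a j].

Definition dist n (r : 'I_n -> nat) (a b : Nidx r) : nat :=
  #|[set j | a j != b j]|.

(* The polynomial ring R = F[x_a : a in N]: variables indexed by N via enum_rank. *)
Definition PR (F : fieldType) n (r : 'I_n -> nat) := {mpoly F[#|Nidx r|]}.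

Definition xv (F : fieldType) n (r : 'I_n -> nat) (a : Nidx r) : PR F r :=
  'X_(enum_rank a).

Definition fgen (F : fieldType) n (r : 'I_n -> nat) (j1 : 'I_n) (a b : Nidx r)
  : PR F r :=
  xv F a * xv F b - xv F (swp j1 a b) * xv F (swp j1 b a).

Definition in_ideal_gen (R : comPzRingType) (G : R -> Prop) (f : R) : Prop :=
  exists s : seq (R * R), (forall p, p \in s -> G p.2) /\
    f = \sum_(p <- s) p.1 * p.2.

Definition gens_I (F : fieldType) n (r : 'I_n -> nat) (j1 : 'I_n)
  (g : PR F r) : Prop :=
  exists a b : Nidx r, dist a b = 2%N /\ g = fgen F j1 a b.

Definition in_I (F : fieldType) n (r : 'I_n -> nat) (j1 : 'I_n) (f : PR F r)
  : Prop := in_ideal_gen (@gens_I F n r j1) f.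

Definition in_colon (F : fieldType) n (r : 'I_n -> nat) (j1 : 'I_n)
  (x f : PR F r) : Prop := @in_I F n r j1 (f * x).

From HB Require Import structures.
From mathcomp Require Import all_boot all_algebra.
From mathcomp Require Import mpoly zify boolp.
From Stdlib Require Import Relations.
Set Implicit Arguments. Unset Strict Implicit. Unset Printing Implicit Defensive.

(* Since [I^<1>] is generated by binomials, a polynomial lies in it iff its coefficients
   sum to zero on each class of the equivalence on monomials generated by the moves
   [x_a x_b -> x_s(1,a,b) x_s(1,b,a)]. View a monomial as a multiset of points of N and
   call two points of the same fiber if they differ at most in the first coordinate.
   A move exchanges the first coordinates of two points in adjacent fibers (fibers
   differing in exactly one coordinate). Following the point [o] along a chain of moves
   from [x_o m] to [x_o m'], it ends as a point [p] with the first coordinate of [o],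
   joined to the fiber of [o] by a path of occupied fibers; along such a path two
   points can exchange first coordinates. Hence [x_o m ~ x_o m'] iff
   [x_o' m ~ x_o' m'], so the class sums of [f x_o] and [f x_o'] vanish together. *)

Section Fibers.

Variables (n : nat) (r : 'I_n -> nat) (i1 : 'I_n).
Local Notation N := (Nidx r).
Implicit Types a b c : N.

Definition same_fiber a b := [forall j, (j != i1) ==> (a j == b j)].

Lemma same_fiberP a b : reflect (forall j, j != i1 -> a j = b j) (same_fiber a b).
Proof.
apply: (iffP forallP) => h j; first by move=> /(implyP (h j)) /eqP.
by apply/implyP => /h ->.
Qed.

Lemma same_fiber_refl a : same_fiber a a.
Proof. exact/same_fiberP. Qed.

Lemma same_fiber_sym a b : same_fiber a b = same_fiber b a.
Proof. by apply/same_fiberP/same_fiberP => h j /h. Qed.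

Lemma same_fiber_trans b a c : same_fiber a b -> same_fiber b c -> same_fiber a c.
Proof.
by move=> /same_fiberP hab /same_fiberP hbc; apply/same_fiberP => j hj; rewrite hab ?hbc.
Qed.

Lemma swpE a b j : swp i1 a b j = if j == i1 then b j else a j.
Proof. by rewrite ffunE. Qed.

Lemma swp_swpl a b c : swp i1 (swp i1 a b) c = swp i1 a c.
Proof. by apply/ffunP => j; rewrite !swpE; case: (j == i1). Qed.

Lemma swp_swpr a b c : swp i1 a (swp i1 b c) = swp i1 a c.
Proof. by apply/ffunP => j; rewrite !swpE; case: eqP => // ->. Qed.

Lemma swpxx a : swp i1 a a = a.
Proof. by apply/ffunP => j; rewrite swpE; case: eqP => // ->. Qed.

Lemma swp_i1 a b : swp i1 a b i1 = b i1.
Proof. by rewrite swpE eqxx. Qed.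

Lemma swp_eq_i1 a b c : b i1 = c i1 -> swp i1 a b = swp i1 a c.
Proof. by move=> e; apply/ffunP => j; rewrite !swpE; case: eqP => // ->. Qed.

Lemma swp_pair_eq a b : a i1 = b i1 -> swp i1 a b = a /\ swp i1 b a = b.
Proof. by move=> e; rewrite (swp_eq_i1 _ e) (swp_eq_i1 _ (esym e)) !swpxx. Qed.

Lemma swp_same_fiber a b : same_fiber a b -> swp i1 a b = b.
Proof. by move=> /same_fiberP h; apply/ffunP => j; rewrite swpE; case: eqVneq => // /h. Qed.

Lemma same_fiber_swp a b : same_fiber (swp i1 a b) a.
Proof. by apply/same_fiberP => j /negbTE hj; rewrite swpE hj. Qed.

Definition offdist a b := #|[set j | (j != i1) && (a j != b j)]|.

Definition adjacent a b := offdist a b == 1%N.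

Lemma distE a b : dist a b = ((a i1 != b i1) + offdist a b)%N.
Proof.
rewrite /dist /offdist; case: (eqVneq (a i1) (b i1)) => [e|ne] /=.
  by apply: eq_card => j; rewrite !inE; case: (eqVneq j i1) => [->|]; rewrite ?e ?eqxx.
rewrite (_ : [set j | a j != b j] = i1 |: [set j | (j != i1) && (a j != b j)]).
  by rewrite cardsU1 !inE eqxx.
by apply/setP => j; rewrite !inE; case: (eqVneq j i1) => // ->.
Qed.

Lemma offdist_fiber a a' b b' :
  same_fiber a a' -> same_fiber b b' -> offdist a b = offdist a' b'.
Proof.
move=> /same_fiberP ha /same_fiberP hb; apply: eq_card => j; rewrite !inE.
by case: (eqVneq j i1) => //= hj; rewrite ha ?hb.
Qed.

Lemma offdistC a b : offdist a b = offdist b a.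
Proof. by apply: eq_card => j; rewrite !inE (eq_sym (a j)). Qed.

Lemma offdist_eq0 a b : (offdist a b == 0%N) = same_fiber a b.
Proof.
rewrite cards_eq0; apply/eqP/same_fiberP => [h j hj|h].
  by move: h => /setP/(_ j); rewrite !inE hj /= => /negbFE/eqP.
by apply/setP => j; rewrite !inE; case: (eqVneq j i1) => //= /h ->; rewrite eqxx.
Qed.

Lemma adjacent_fiber a a' b b' :
  same_fiber a a' -> same_fiber b b' -> adjacent a b = adjacent a' b'.
Proof. by move=> ha hb; rewrite /adjacent (offdist_fiber ha hb). Qed.

Lemma adjacent_sym a b : adjacent a b = adjacent b a.
Proof. by rewrite /adjacent offdistC. Qed.

Lemma adjacent_not_same_fiber a b : adjacent a b -> ~~ same_fiber a b.
Proof. by rewrite /adjacent -offdist_eq0 => /eqP ->. Qed.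

Lemma adjacent_dist a b : adjacent a b -> a i1 != b i1 -> dist a b = 2%N.
Proof. by rewrite distE => /eqP -> ->. Qed.

Lemma dist_adjacent a b : dist a b = 2%N -> a i1 != b i1 -> adjacent a b.
Proof. by rewrite distE /adjacent => + ne; rewrite ne; lia. Qed.

End Fibers.

Section Moves.

Variables (n : nat) (r : 'I_n -> nat) (i1 : 'I_n).
Local Notation N := (Nidx r).
Local Notation M := 'X_{1..#|Nidx r|}.
Implicit Types (a b d o p q x y z : N) (w : M).

Definition xm a : M := U_(enum_rank a)%MM.

Lemma xm_rank a b : xm a (enum_rank b) = (a == b) :> nat.
Proof. by rewrite mnm1E (inj_eq enum_rank_inj). Qed.

Lemma mnm_split_xm w a : (0 < w (enum_rank a))%N -> exists w1, w = (w1 + xm a)%MM.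
Proof.
move=> h; exists (w - xm a)%MM; apply/mnmP => j; rewrite mnmDE mnmBE mnm1E.
by case: eqP => [<-|_]; [rewrite subnK | rewrite subn0 addn0].
Qed.

Lemma addxm_eq w w' a b : (w + xm a = w' + xm b)%MM -> a != b ->
  exists w1, w' = (w1 + xm a)%MM /\ w = (w1 + xm b)%MM.
Proof.
move=> /mnmP e ab; have [w1 ew'] : exists w1, w' = (w1 + xm a)%MM.
  apply: mnm_split_xm; move: (e (enum_rank a)).
  by rewrite !mnmDE !xm_rank eqxx [b == _]eq_sym (negbTE ab); lia.
by exists w1; split => //; apply/mnmP => j; move: (e j); rewrite ew' !mnmDE; lia.
Qed.

Local Ltac mnm_ac := apply/mnmP => ?; rewrite !mnmDE; lia.

(* Trivial when [a i1 = b i1], and otherwise the move of a generator of [I^<1>]. *)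
Definition step w w' := exists w0 a b, [/\ adjacent i1 a b,
  w = (w0 + xm a + xm b)%MM & w' = (w0 + xm (swp i1 a b) + xm (swp i1 b a))%MM].

Definition steps := clos_refl_trans M step.

Lemma steps_swap w a b : adjacent i1 a b ->
  steps (w + xm a + xm b)%MM (w + xm (swp i1 a b) + xm (swp i1 b a))%MM.
Proof. by move=> hab; apply: rt_step; exists w, a, b. Qed.

Lemma steps_trans w1 w2 w3 : steps w1 w2 -> steps w2 w3 -> steps w1 w3.
Proof. exact: rt_trans. Qed.

Lemma step_sym w w' : step w w' -> step w' w.
Proof.
case=> w0 [a] [b] [hab -> ->]; exists w0, (swp i1 a b), (swp i1 b a).
rewrite !swp_swpl !swp_swpr !swpxx; split=> //.
by rewrite (adjacent_fiber (same_fiber_swp i1 _ _) (same_fiber_swp i1 _ _)).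
Qed.

Lemma steps_sym w w' : steps w w' -> steps w' w.
Proof.
elim=> [x y hxy|x|x y z _ hyx _ hzy].
- exact/rt_step/step_sym.
- exact: rt_refl.
- exact: steps_trans hzy hyx.
Qed.

Definition occupies w z := exists2 d, (0 < w (enum_rank d))%N & same_fiber i1 d z.

Lemma occupiesD w a z : occupies (w + xm a)%MM z <-> occupies w z \/ same_fiber i1 a z.
Proof.
split=> [[d]|[[d hd hdz]|haz]].
- rewrite mnmDE xm_rank; case: (eqVneq a d) => [<- _|_ hd hdz]; first by right.
  by left; exists d; rewrite // -(addn0 (w _)).
- by exists d; rewrite // mnmDE ltn_addr.
- by exists a; rewrite // mnmDE xm_rank eqxx addn1.
Qed.

Lemma steps_occupies w w' z : steps w w' -> occupies w z -> occupies w' z.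
Proof.
elim=> // [x y [w0 [a] [b] [_ -> ->]]|x y u _ IH1 _ IH2]; last by move/IH1/IH2.
rewrite !occupiesD => -[[h|h]|h]; [by left; left | left; right | right];
  exact: same_fiber_trans (same_fiber_swp i1 _ _) h.
Qed.

Inductive linked (O : N -> Prop) : N -> N -> Prop :=
| linked_fiber x y of same_fiber i1 x y : linked O x y
| linked_adj x z y of adjacent i1 x z & O z & linked O z y : linked O x y.

Lemma linked_fiber_l O x x' y : same_fiber i1 x x' -> linked O x' y -> linked O x y.
Proof.
move=> hx hc; case: x' y / hc hx => [x' y h|x' z y ha hz hc] hx.
- by apply: linked_fiber; apply: same_fiber_trans hx h.
- by apply: linked_adj hz hc; rewrite (adjacent_fiber hx (same_fiber_refl i1 z)).
Qed.

Lemma linked_mono (O O' : N -> Prop) x y :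
  (forall z, O z -> O' z) -> linked O x y -> linked O' x y.
Proof.
move=> hO; elim=> [x0 y0 h|x0 z y0 ha hz _ IH]; first exact: linked_fiber.
exact: linked_adj ha (hO _ hz) IH.
Qed.

Lemma linked_trans O x y u : linked O x y -> linked O y u -> linked O x u.
Proof.
elim=> [x0 y0 h|x0 z y0 ha hz _ IH] hc; first exact: linked_fiber_l h hc.
exact: linked_adj ha hz (IH hc).
Qed.

(* Along a linked path of occupied fibers, the first coordinates of two points can
   be exchanged: pass the first coordinate of [a] to a point [d] of the next fiber,
   exchange recursively between that point and [b], and restore [d]. *)
Lemma linked_steps_swp (O : N -> Prop) x y : linked O x y ->
  forall W0 a b, (forall z, O z -> occupies (W0 + xm a + xm b)%MM z) ->
  same_fiber i1 a x -> same_fiber i1 b y ->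
  steps (W0 + xm a + xm b)%MM (W0 + xm (swp i1 a b) + xm (swp i1 b a))%MM.
Proof.
elim=> {x y} [x y hxy|x z y hxz hz _ IH] W0 a b hW hax hby.
  have hab : same_fiber i1 a b.
    by apply: same_fiber_trans hax (same_fiber_trans hxy _); rewrite same_fiber_sym.
  rewrite (swp_same_fiber hab) swp_same_fiber 1?same_fiber_sym //.
  by rewrite (_ : W0 + xm b + xm a = W0 + xm a + xm b)%MM; [apply: rt_refl | mnm_ac].
have [d hd hdz] := hW z hz.
have had : adjacent i1 a d by rewrite (adjacent_fiber hax hdz).
have [hdb|hdb] := boolP (same_fiber i1 d b).
  by apply: steps_swap; rewrite -(adjacent_fiber (same_fiber_refl i1 a) hdb).
have hda : d != a.
  by apply: contraNneq (adjacent_not_same_fiber had) => ->; apply: same_fiber_refl.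
have hdb' : d != b by apply: contraNneq hdb => ->; apply: same_fiber_refl.
have [W1 eW0] : exists W1, W0 = (W1 + xm d)%MM.
  apply: mnm_split_xm; move: hd.
  by rewrite !mnmDE !xm_rank ![_ == d]eq_sym (negbTE hda) (negbTE hdb') !addn0.
subst W0.
set a' := swp i1 a d; set d' := swp i1 d a.
have pass : steps (W1 + xm d + xm a + xm b) (W1 + xm a' + xm d' + xm b)%MM.
  rewrite (_ : W1 + xm d + xm a + xm b = W1 + xm b + xm a + xm d)%MM; last by mnm_ac.
  rewrite (_ : W1 + xm a' + xm d' + xm b = W1 + xm b + xm a' + xm d')%MM; last by mnm_ac.
  exact: steps_swap.
have exch := IH (W1 + xm a')%MM d' b (fun u hu => steps_occupies pass (hW u hu))
  (same_fiber_trans (same_fiber_swp i1 _ _) hdz) hby.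
rewrite /d' swp_swpl swp_swpr in exch.
have had' : adjacent i1 a' (swp i1 d b).
  by rewrite (adjacent_fiber (same_fiber_swp i1 _ _) (same_fiber_swp i1 _ _)).
have restore := steps_swap (W1 + xm (swp i1 b a))%MM had'.
rewrite /a' swp_swpl swp_swpr swp_swpl swp_swpr swpxx in restore.
apply: steps_trans pass (steps_trans exch _).
rewrite (_ : W1 + xm d + _ + _ = W1 + xm (swp i1 b a) + xm (swp i1 a b) + xm d)%MM;
  last by mnm_ac.
rewrite (_ : W1 + _ + _ + xm (swp i1 b a) = W1 + xm (swp i1 b a) + xm a' + xm (swp i1 d b))%MM;
  last by mnm_ac.
exact: restore.
Qed.

(* The point [p] of [w0 + x_p], followed along moves to [w'], ends as a point [p']
   with the same first coordinate, in a fiber linked to that of [p] through fibers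
   occupied by [w0 + x_p]; and the moves can be replayed after giving [p] the first
   coordinate of [q]. *)
Definition tracks q w0 p w' := exists w0' p', [/\ w' = (w0' + xm p')%MM, p' i1 = p i1,
  linked (occupies (w0 + xm p)%MM) p p'
  & steps (w0 + xm (swp i1 p q))%MM (w0' + xm (swp i1 p' q))%MM].

Lemma tracks_refl q w0 p : tracks q w0 p (w0 + xm p)%MM.
Proof.
by exists w0, p; split; [| | apply/linked_fiber/same_fiber_refl | apply: rt_refl].
Qed.

(* In a move of [a] with [b], the first coordinate of [a] passes to the fiber of [b]. *)
Lemma tracks_partner q w0 a b : adjacent i1 a b ->
  tracks q (w0 + xm b)%MM a (w0 + xm (swp i1 a b) + xm (swp i1 b a))%MM.
Proof.
move=> hab; exists (w0 + xm (swp i1 a b))%MM, (swp i1 b a); split=> //.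
- exact: swp_i1.
- apply: linked_adj hab _ _; first by apply/occupiesD; left; apply/occupiesD; right;
    apply: same_fiber_refl.
  by apply: linked_fiber; rewrite same_fiber_sym same_fiber_swp.
- have haq : adjacent i1 (swp i1 a q) b.
    by rewrite (adjacent_fiber (same_fiber_swp i1 _ _) (same_fiber_refl i1 b)).
  rewrite (_ : w0 + xm b + _ = w0 + xm (swp i1 a q) + xm b)%MM; last by mnm_ac.
  by rewrite swp_swpl; have := steps_swap w0 haq; rewrite swp_swpl swp_swpr.
Qed.

Lemma tracks_step q w0 p w' : step (w0 + xm p)%MM w' -> tracks q w0 p w'.
Proof.
case=> m0 [a] [b] [hab e ->].
have [epa|hpa] := eqVneq p a.
  subst p; rewrite (addIm (_ : w0 + xm a = m0 + xm b + xm a)%MM); last by rewrite e; mnm_ac.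
  exact: tracks_partner.
have [epb|hpb] := eqVneq p b.
  subst p; rewrite (addIm (_ : w0 + xm b = m0 + xm a + xm b)%MM) //.
  rewrite -addmA [(xm (swp i1 a b) + _)%MM]addmC addmA.
  by apply: tracks_partner; rewrite adjacent_sym.
have [m1 [em1 ew0]] := addxm_eq e hpb.
have [m2 [em0 em2]] := addxm_eq (esym em1) hpa.
exists (m2 + xm (swp i1 a b) + xm (swp i1 b a))%MM, p; split=> //.
- by rewrite em0; mnm_ac.
- exact/linked_fiber/same_fiber_refl.
- rewrite ew0 em2 (_ : m2 + xm a + xm b + _ = m2 + xm (swp i1 p q) + xm a + xm b)%MM;
    last by mnm_ac.
  rewrite (_ : m2 + xm (swp i1 a b) + _ + _ =
    m2 + xm (swp i1 p q) + xm (swp i1 a b) + xm (swp i1 b a))%MM; last by mnm_ac.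
  exact: steps_swap.
Qed.

Lemma tracks_steps q w w' : steps w w' -> forall w0 p, w = (w0 + xm p)%MM -> tracks q w0 p w'.
Proof.
elim=> [x y hxy|x|x y z hxy IH1 _ IH2] w0 p ex; subst x.
- exact: tracks_step.
- exact: tracks_refl.
have [w1 [p1 [ey hp1 hl1 hs1]]] := IH1 _ _ erefl.
have [w2 [p2 [ez hp2 hl2 hs2]]] := IH2 _ _ ey.
exists w2, p2; split=> //; first by rewrite hp2.
  apply: linked_trans hl1 (linked_mono _ hl2) => u; rewrite -ey.
  exact/steps_occupies/steps_sym.
exact: steps_trans hs1 hs2.
Qed.

Lemma steps_same_fiber o o' w w' : same_fiber i1 o o' ->
  steps (xm o + w)%MM (xm o + w')%MM -> steps (xm o' + w)%MM (xm o' + w')%MM.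
Proof.
rewrite ![(xm _ + _)%MM]addmC => hoo he.
have [w0 [p [e hp hl hs]]] := tracks_steps o' he erefl.
rewrite swp_same_fiber // in hs.
have [epo|hpo] := eqVneq p o.
  by subst p; move: hs; rewrite swp_same_fiber // -(addIm e).
have [w1 [ew0 ew']] := addxm_eq e (contra_neq esym hpo).
have hocc z : occupies (w + xm o)%MM z -> occupies (w1 + xm o' + xm p)%MM z.
  move=> /(steps_occupies he); rewrite ew' !occupiesD => -[[h|h]|h].
  - by left; left.
  - by right.
  - by left; right; apply: same_fiber_trans h; rewrite same_fiber_sym.
have hoo' : same_fiber i1 o' o by rewrite same_fiber_sym.
have := linked_steps_swp hl hocc hoo' (same_fiber_refl i1 p).
rewrite (swp_eq_i1 _ hp) swp_same_fiber // => exch.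
apply: steps_trans hs _; rewrite ew0 ew' (_ : w1 + xm p + xm o' = w1 + xm o' + xm p)%MM.
  exact: steps_sym exch.
by mnm_ac.
Qed.

End Moves.

Import GRing.Theory.
Local Open Scope ring_scope.

Section IdealGen.

Variables (R : comPzRingType) (G : R -> Prop).

Lemma in_ideal_gen0 : in_ideal_gen G 0.
Proof. by exists [::]; rewrite big_nil. Qed.

Lemma in_ideal_genD g h : in_ideal_gen G g -> in_ideal_gen G h -> in_ideal_gen G (g + h).
Proof.
move=> [s [hs ->]] [t [ht ->]]; exists (s ++ t); rewrite big_cat; split=> // p.
by rewrite mem_cat => /orP[/hs|/ht].
Qed.

Lemma in_ideal_genMl c g : in_ideal_gen G g -> in_ideal_gen G (c * g).
Proof.
move=> [s [hs ->]]; exists [seq (c * p.1, p.2) | p <- s]; split.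
  by move=> p /mapP[q /hs + ->].
by rewrite big_map mulr_sumr; apply: eq_bigr => p _; rewrite mulrA.
Qed.

Lemma in_ideal_gen_sum I (s : seq I) (F : I -> R) :
  (forall i, in_ideal_gen G (F i)) -> in_ideal_gen G (\sum_(i <- s) F i).
Proof.
move=> hF; elim: s => [|i s IH]; first by rewrite big_nil; apply: in_ideal_gen0.
by rewrite big_cons; apply: in_ideal_genD.
Qed.

Lemma in_ideal_gen_base g : G g -> in_ideal_gen G g.
Proof.
by move=> hg; exists [:: (1, g)]; rewrite big_seq1 mul1r; split=> // p /[!inE] /eqP ->.
Qed.

End IdealGen.

Section CoefSum.

Variables (R : nzRingType) (k : nat) (P : pred 'X_{1..k}).

Definition coef_sum (g : {mpoly R[k]}) := \sum_(m <- msupp g | P m) g@_m.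

Lemma coef_sumE s g : uniq s -> {subset msupp g <= s} ->
  coef_sum g = \sum_(m <- s | P m) g@_m.
Proof.
move=> us hs; rewrite [RHS](bigID (mem (msupp g))) /= [X in _ + X]big1 ?addr0; last first.
  by move=> m /andP[_ /memN_msupp_eq0].
rewrite /coef_sum -[LHS]big_filter -[RHS]big_filter; apply: perm_big; apply: uniq_perm.
- exact/filter_uniq/msupp_uniq.
- exact: filter_uniq.
move=> m; rewrite !mem_filter.
by case: (boolP (m \in msupp g)) => [/hs ->|]; rewrite ?andbT ?andbF.
Qed.

Lemma coef_sumB : additive coef_sum.
Proof.
move=> g h; set s := undup (msupp g ++ msupp h).
have sub u : {subset msupp u <= msupp g ++ msupp h} -> {subset msupp u <= s}.
  by move=> hu m /hu; rewrite mem_undup.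
rewrite !(@coef_sumE s) ?undup_uniq //.
- by rewrite -sumrB; apply: eq_bigr => m _; rewrite mcoeffB.
- by apply: sub => m hm; rewrite mem_cat hm orbT.
- by apply: sub => m hm; rewrite mem_cat hm.
- exact/sub/msuppB_le.
Qed.

Lemma coef_sum_mulX g mu :
  coef_sum (g * 'X_[mu]) = \sum_(m <- msupp g | P (mu + m)%MM) g@_m.
Proof.
rewrite /coef_sum (perm_big _ (msuppMX g mu)) big_map.
by apply: eq_bigr => m _; rewrite mcoeffMX.
Qed.

End CoefSum.

HB.instance Definition _ R k P :=
  GRing.isAdditive.Build {mpoly R[k]} R (@coef_sum R k P) (@coef_sumB R k P).

Section ClassSums.

Variables (F : fieldType) (n : nat) (r : 'I_n -> nat) (i1 : 'I_n).
Local Notation N := (Nidx r).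
Local Notation M := 'X_{1..#|Nidx r|}.
Local Notation steps := (@steps n r i1).
Implicit Types (a b o : N) (g : PR F r).

Definition in_class (nu : M) : pred M := fun m => `[< steps m nu >].

Lemma in_class_steps nu m m' : steps m m' -> in_class nu m = in_class nu m'.
Proof.
move=> hm; apply/asboolP/asboolP => h; first exact: steps_trans (steps_sym hm) h.
exact: steps_trans hm h.
Qed.

Lemma in_class_refl nu : in_class nu nu.
Proof. exact/asboolP/rt_refl. Qed.

Lemma fgenE a b :
  fgen F i1 a b = 'X_[xm a + xm b] - 'X_[xm (swp i1 a b) + xm (swp i1 b a)].
Proof. by rewrite /fgen /xv !mpolyXD. Qed.

Lemma steps_in_I w w' : steps w w' -> in_I i1 ('X_[w] - 'X_[w'] : PR F r).
Proof.
elim=> [x y [w0 [a] [b] [hab -> ->]]|x|x y z _ hxy _ hyz].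
- rewrite -!addmA !mpolyXD -mulrBr -!mpolyXD -fgenE; apply: in_ideal_genMl.
  have [e|ne] := eqVneq (a i1) (b i1).
    by rewrite fgenE; have [-> ->] := swp_pair_eq e; rewrite subrr; apply: in_ideal_gen0.
  by apply: in_ideal_gen_base; exists a, b; rewrite (adjacent_dist hab ne).
- by rewrite subrr; apply: in_ideal_gen0.
- by rewrite -(subrKA 'X_[y]); apply: in_ideal_genD.
Qed.

Lemma dist2_steps a b w : dist a b = 2%N ->
  steps (xm a + xm b + w)%MM (xm (swp i1 a b) + xm (swp i1 b a) + w)%MM.
Proof.
move=> hd; have [e|ne] := eqVneq (a i1) (b i1).
  by have [-> ->] := swp_pair_eq e; apply: rt_refl.
rewrite ![(_ + _ + w)%MM]addmC !addmA; apply: steps_swap.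
exact: dist_adjacent.
Qed.

Lemma in_I_class_sum g : in_I i1 g -> forall nu, coef_sum (in_class nu) g = 0.
Proof.
case=> s [hs ->] nu; rewrite raddf_sum big1_seq // => -[c f] /hs [a [b [hd /= ->]]].
rewrite fgenE mulrBr raddfB /= !coef_sum_mulX.
under eq_bigl => m do rewrite (in_class_steps nu (dist2_steps m hd)).
by rewrite subrr.
Qed.

Definition class_rep (mu : M) : M := xchoose (ex_intro _ mu (in_class_refl mu)).

Lemma class_rep_steps mu : steps (class_rep mu) mu.
Proof. exact/asboolP/(xchooseP (ex_intro _ mu (in_class_refl mu))). Qed.

Lemma class_rep_eq mu nu : steps mu nu -> class_rep mu = class_rep nu.
Proof.
move=> h; apply: eq_xchoose => m; apply/asboolP/asboolP => hm.
  exact: steps_trans hm h.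
exact: steps_trans hm (steps_sym h).
Qed.

(* [g] is congruent modulo [I^<1>] to the sum of [g@_m *: 'X_[class_rep m]], whose
   coefficient at a representative [nu] is the class sum of [g] at [nu]. *)
Lemma class_sum_in_I g : (forall nu, coef_sum (in_class nu) g = 0) -> in_I i1 g.
Proof.
move=> h0; have reps0 : \sum_(m <- msupp g) g@_m *: 'X_[class_rep m] = 0 :> PR F r.
  apply/mpolyP => nu; rewrite mcoeff0 raddf_sum /=.
  under eq_bigr do rewrite mcoeffZ mcoeffX mulr_natr mulrb.
  rewrite -big_mkcond /=.
  have [enu|nnu] := eqVneq (class_rep nu) nu.
    rewrite -[RHS](h0 nu); apply: eq_bigl => m; apply/eqP/asboolP => [<-|hm].
      exact/steps_sym/class_rep_steps.
    by rewrite (class_rep_eq hm).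
  rewrite big1 // => m /eqP em; move: nnu.
  by rewrite -em (class_rep_eq (class_rep_steps m)) eqxx.
rewrite (mpolyE g) -[X in in_I _ X]subr0 -[X in _ - X]reps0 -sumrB.
apply: in_ideal_gen_sum => m; rewrite -scalerBr -mul_mpolyC.
exact/in_ideal_genMl/steps_in_I/steps_sym/class_rep_steps.
Qed.

Lemma class_sum_mulX_same_fiber o o' g : same_fiber i1 o o' ->
  (forall nu, coef_sum (in_class nu) (g * 'X_[xm o]) = 0) ->
  forall nu, coef_sum (in_class nu) (g * 'X_[xm o']) = 0.
Proof.
move=> hoo h0 nu; rewrite coef_sum_mulX.
have [[m0 hm0]|none] := pselect (exists m0, steps (xm o' + m0)%MM nu).
  rewrite -[RHS](h0 (xm o + m0)%MM) coef_sum_mulX; apply: eq_bigl => m.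
  apply/asboolP/asboolP => h.
  - by apply: steps_same_fiber (steps_trans h (steps_sym hm0)); rewrite same_fiber_sym.
  - exact: steps_trans (steps_same_fiber hoo h) hm0.
by rewrite big1 // => m /asboolP hm; case: none; exists m.
Qed.

End ClassSums.

Theorem lemma4p15 (F : fieldType) (n : nat) (r : 'I_n -> nat)
  (hn : (3 <= n)%N) (hr : forall j, (0 < r j)%N)
  (i1 : 'I_n) (hi1 : nat_of_ord i1 = 0%N)
  (o o' : Nidx r) (hoo' : forall j : 'I_n, j != i1 -> o j = o' j) :
  forall f : PR F r, @in_colon F n r i1 (xv F o) f <-> @in_colon F n r i1 (xv F o') f.
Proof.
have hoo : same_fiber i1 o o' by apply/same_fiberP.
move=> f; split=> /in_I_class_sum h; apply: class_sum_in_I.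
  exact: class_sum_mulX_same_fiber hoo h.
by apply: class_sum_mulX_same_fiber h; rewrite same_fiber_sym.
Qed.
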